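(* Let $r \in \mathbb{Q}_{>0}$ be such that $S_r$ is atomic. The following are equivalent: (1) $r \in \mathbb{N}$; (2) $\rho(S_r) = 1$; (3) $\rho(S_r) < \infty$. Consequently, $\rho(S_r) \in \{1, \infty\}$.
   Context: For $q \in \mathbb{Q}_{>0}$, $\mathsf{n}(q),\mathsf{d}(q)$ are the positive coprime integers with $q = \mathsf{n}(q)/\mathsf{d}(q)$. $S_r$ is the additive submonoid of $(\mathbb{Q}_{\ge 0},+)$ generated by $\{r^n : n \in \mathbb{N}_0\}$; it is atomic exactly when $r=1$ or $\mathsf{n}(r)>1$. $\mathsf{L}(x)$ denotes the set of lengths of factorizations of $x$ into atoms. The elasticity of $x \ne 0$ is $\rho(x) = \sup \mathsf{L}(x)/\inf \mathsf{L}(x) \in \mathbb{Q}_{\ge 1} \cup \{\infty\}$, $\rho(0)=1$, and $\rho(S_r) = \sup\{\rho(x) : x \in S_r \setminus \{0\}\}$. *)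

From HB Require Import structures.
From mathcomp Require Import all_boot all_order all_algebra.
From Stdlib Require Import Classical ClassicalEpsilon.
Set Implicit Arguments. Unset Strict Implicit. Unset Printing Implicit Defensive.
Import Order.TTheory GRing.Theory Num.Theory.
Local Open Scope ring_scope.

(* S_r : the additive submonoid of Q_{>=0} generated by {r^n : n in N_0}:
   x \in S_r iff x is a finite sum of powers of r (empty sum = 0). *)
Definition in_Sr (r x : rat) : Prop :=
  exists s : seq nat, x = \sum_(n <- s) r ^+ n.

(* atoms of S_r: nonzero non-units (S_r is reduced) not a sum of two nonzero elements *)
Definition atom (r a : rat) : Prop :=
  [/\ in_Sr r a, a != 0 &
      forall b c, in_Sr r b -> in_Sr r c -> a = b + c -> b = 0 \/ c = 0].

(* a factorization of x is a finite multiset (here: a list, up to order) of atoms summing to x *)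
Definition factorization (r x : rat) (s : seq rat) : Prop :=
  (forall a, a \in s -> atom r a) /\ \sum_(a <- s) a = x.

Definition atomic (r : rat) : Prop :=
  forall x, in_Sr r x -> x != 0 -> exists s, factorization r x s.

Definition lengths (r x : rat) (n : nat) : Prop :=
  exists s, factorization r x s /\ size s = n.

Definition ext_max (P : nat -> Prop) : option nat :=
  match excluded_middle_informative
          (exists m, P m /\ forall n, P n -> (n <= m)%N) with
  | left H => Some (proj1_sig (constructive_indefinite_description _ H))
  | right _ => None
  end.

Definition ext_min (P : nat -> Prop) : option nat :=
  match excluded_middle_informative
          (exists m, P m /\ forall n, P n -> (m <= n)%N) with
  | left H => Some (proj1_sig (constructive_indefinite_description _ H))
  | right _ => None
  end.

(* elasticity rho(x) in Q_{>=1} \cup {oo}; [None] encodes oo.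
   rho(0) = 1; for x <> 0, rho(x) = sup L(x) / inf L(x) (= oo if L(x) is unbounded). *)
Definition rho (r x : rat) : option rat :=
  if x == 0 then Some 1 else
  match ext_max (lengths r x), ext_min (lengths r x) with
  | Some M, Some m => Some (M%:R / m%:R)
  | _, _ => None
  end.

Definition ext_le (v : option rat) (q : rat) : Prop :=
  match v with Some p => p <= q | None => False end.

Definition rho_Sr_ub (r q : rat) : Prop :=
  forall x, in_Sr r x -> x != 0 -> ext_le (rho r x) q.

(* rho(S_r) = v, where v in Q \cup {oo} ([None] = oo):
   Some q : q is the least upper bound of the elasticities;
   None   : the elasticities have no (rational, equivalently real) upper bound. *)
Definition rho_Sr_is (r : rat) (v : option rat) : Prop :=
  match v with
  | Some q => rho_Sr_ub r q /\ (forall q', rho_Sr_ub r q' -> q <= q')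
  | None => forall q, ~ rho_Sr_ub r q
  end.

From mathcomp Require Import all_boot all_order all_algebra.
From Stdlib Require Import Classical ClassicalEpsilon.
From mathcomp Require Import lra.
Set Implicit Arguments.
Unset Strict Implicit.
Unset Printing Implicit Defensive.
Import Order.TTheory GRing.Theory Num.Theory.
Local Open Scope ring_scope.

(* If r = n is an integer then S_r = N, whose only atom is 1, so every x has
   the single factorization length x and rho(S_r) = 1.  Otherwise write
   r = a / b in lowest terms; atomicity forces a, b > 1, and then every power
   r ^ n is an atom: a splitting of r ^ n would write 1 as a sum of positive
   powers of a / b or of b / a, and clearing denominators contradicts
   coprimality.  Hence a ^ N = a ^ N * r ^ 0 = b ^ N * r ^ N has factorizations
   of lengths a ^ N and b ^ N, so rho(a ^ N) >= (max(a, b) / min(a, b)) ^ N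
   is unbounded. *)

Lemma ext_maxP (P : nat -> Prop) M : ext_max P = Some M ->
  P M /\ forall n, P n -> (n <= M)%N.
Proof.
rewrite /ext_max; case: excluded_middle_informative => // H [<-].
exact: proj2_sig (constructive_indefinite_description _ H).
Qed.

Lemma ext_minP (P : nat -> Prop) m : ext_min P = Some m ->
  P m /\ forall n, P n -> (m <= n)%N.
Proof.
rewrite /ext_min; case: excluded_middle_informative => // H [<-].
exact: proj2_sig (constructive_indefinite_description _ H).
Qed.

Lemma ext_max_eq (P : nat -> Prop) M : P M -> (forall n, P n -> (n <= M)%N) ->
  ext_max P = Some M.
Proof.
move=> PM leM; rewrite /ext_max; case: excluded_middle_informative => [H|[]];
  last by exists M.
congr Some; case: (constructive_indefinite_description _ H) => M' /= [PM' leM'].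
by apply/eqP; rewrite eqn_leq leM // leM'.
Qed.

Lemma ext_min_eq (P : nat -> Prop) m : P m -> (forall n, P n -> (m <= n)%N) ->
  ext_min P = Some m.
Proof.
move=> Pm gem; rewrite /ext_min; case: excluded_middle_informative => [H|[]];
  last by exists m.
congr Some; case: (constructive_indefinite_description _ H) => m' /= [Pm' gem'].
by apply/eqP; rewrite eqn_leq gem' // gem.
Qed.

Lemma in_Sr_pow r n : in_Sr r (r ^+ n).
Proof. by exists [:: n]; rewrite big_seq1. Qed.

Lemma in_Sr_natr r k : in_Sr r k%:R.
Proof. by exists (nseq k 0%N); rewrite big_nseq iter_addr_0 expr0. Qed.

Lemma rho_ge_lengths_ratio r x q i j : x != 0 -> rho r x = Some q ->
  lengths r x i -> lengths r x j -> i%:R / j%:R <= q.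
Proof.
move=> x0; rewrite /rho (negPf x0) => + Li Lj.
case Emax: ext_max => [M|//]; case Emin: ext_min => [m|//] [<-].
have [_ leM] := ext_maxP Emax.
have [[s [[_ sum_s] <-]] gem] := ext_minP Emin.
have m_gt0 : (0 < size s)%N.
  rewrite lt0n size_eq0; apply: contra_neq x0 => s0.
  by rewrite -sum_s s0 big_nil.
have j_gt0 : (0 < j)%N := leq_trans m_gt0 (gem j Lj).
apply: ler_pM; rewrite ?invr_ge0 ?ler0n ?ler_nat ?leM //.
by rewrite lef_pV2 ?posrE ?ltr0n // ler_nat gem.
Qed.

Lemma lengths_nseq r a m : atom r a -> lengths r (a *+ m) m.
Proof.
move=> atom_a; exists (nseq m a); split; last exact: size_nseq.
by split; [move=> x /nseqP [->] | rewrite big_nseq iter_addr_0].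
Qed.

Lemma in_Sr_natrP (n : nat) x : in_Sr n%:R x -> exists k : nat, x = k%:R.
Proof.
case=> s ->; exists (\sum_(j <- s) n ^ j)%N.
by rewrite natr_sum; apply: eq_bigr => j _; rewrite natrX.
Qed.

Lemma atom_natrE (n : nat) a : atom n%:R a <-> a = 1.
Proof.
split=> [[/in_Sr_natrP [k ->] k_neq0 irr] | ->].
  case: k k_neq0 irr => [|[|k]] //.
  move=> _ /(_ 1 k.+1%:R (in_Sr_natr _ 1) (in_Sr_natr _ _)).
  by rewrite -natr1 addrC => /(_ erefl) [] /eqP; rewrite ?oner_eq0 ?pnatr_eq0.
split; [exact: in_Sr_natr 1 | exact: oner_neq0 |].
move=> y z /in_Sr_natrP [i ->] /in_Sr_natrP [j ->] /eqP.
rewrite -natrD -[1]/(1%:R) eqr_nat.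
by case: i => [|[|i]]; case: j => [|[|j]] //=; by [left | right].
Qed.

Lemma factorization_natr_size (n : nat) x s :
  factorization n%:R x s -> x = (size s)%:R.
Proof.
case=> atoms_s <-; rewrite -sum1_size natr_sum big_seq [RHS]big_seq.
by apply: eq_bigr => a /atoms_s /atom_natrE.
Qed.

Lemma rho_natr (n : nat) x : in_Sr n%:R x -> x != 0 -> rho n%:R x = Some 1.
Proof.
move=> /in_Sr_natrP [k ->] k_neq0.
have lengthsE L : lengths n%:R k%:R L -> L = k.
  by case=> s [/factorization_natr_size /eqP + <-]; rewrite eqr_nat => /eqP.
have Lk : lengths n%:R k%:R k by apply/lengths_nseq/atom_natrE.
by rewrite /rho (negPf k_neq0) (@ext_max_eq _ k) ?(@ext_min_eq _ k) ?divff //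
  => L /lengthsE ->.
Qed.

Lemma rho_Sr_natr (n : nat) : rho_Sr_is n%:R (Some 1).
Proof.
split=> [x Sx x_neq0 | q ub]; first by rewrite rho_natr.
have := ub 1 (in_Sr_natr _ 1) (oner_neq0 _).
by rewrite rho_natr ?oner_neq0 //; exact: in_Sr_natr 1.
Qed.

Lemma pos_rat_coprime_frac (r : rat) : 0 < r -> exists a b : nat,
  [/\ r = a%:R / b%:R, coprime a b, (0 < a)%N & (0 < b)%N].
Proof.
move=> r_gt0; have num_gt0 : 0 < numq r by rewrite numq_gt0.
exists `|numq r|%N, `|denq r|%N; split.
- by rewrite -{1}[r]divq_num_den !natr_absz !gtr0_norm ?denq_gt0.
- exact: coprime_num_den.
- by rewrite absz_gt0 gt_eqF.
- by rewrite absz_gt0 denq_neq0.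
Qed.

Lemma sum_pos_powers_neq1 (q p : nat) (t : seq nat) :
  (1 < q)%N -> (0 < p)%N -> coprime q p -> all (leq 1) t ->
  \sum_(j <- t) (q%:R / p%:R : rat) ^+ j != 1.
Proof.
move=> q_gt1 p_gt0 co_qp /allP t_pos; apply/eqP => sum1.
pose M := (\sum_(j <- t) j)%N.
have le_jM j : j \in t -> (j <= M)%N.
  by move=> jt; rewrite /M (big_rem j) ?leq_addr.
have p_neq0 : p%:R != 0 :> rat by rewrite pnatr_eq0 -lt0n.
have pM_sum : (p ^ M = \sum_(j <- t) q ^ j * p ^ (M - j))%N.
  apply/eqP; rewrite -(eqr_nat rat) natr_sum; apply/eqP.
  rewrite -[LHS]mul1r -[X in X * _]sum1 mulr_suml !big_seq.
  apply: eq_bigr => j /le_jM le_jM'.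
  rewrite natrM !natrX expr_div_n -(subnKC le_jM') exprD mulrA.
  by rewrite divfK ?expf_neq0 // addKn.
have q_dvd_pM : (q %| p ^ M)%N.
  rewrite pM_sum big_seq; apply: dvdn_sum => j /t_pos j_gt0.
  by rewrite dvdn_mulr // dvdn_exp.
have := coprime_dvdr q_dvd_pM (coprimeXr M co_qp).
by rewrite /coprime gcdnn => /eqP q1; rewrite q1 in q_gt1.
Qed.

Lemma coprime_neq (a b : nat) : coprime a b -> (1 < a)%N -> a != b.
Proof.
move=> co_ab a_gt1; apply: contraTneq co_ab => <-.
by rewrite /coprime gcdnn gtn_eqF.
Qed.

Lemma pow_le_sum_pow (r : rat) (s : seq nat) k : 0 <= r -> k \in s ->
  r ^+ k <= \sum_(j <- s) r ^+ j.
Proof.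
move=> r_ge0 ks; rewrite (big_rem k) //= lerDl.
by apply: sumr_ge0 => j _; rewrite exprn_ge0.
Qed.

Lemma in_Sr_pos (r x : rat) : 0 < r -> in_Sr r x -> x != 0 -> 0 < x.
Proof.
move=> r_gt0 [s ->] x_neq0; rewrite lt_def x_neq0.
by apply: sumr_ge0 => j _; rewrite exprn_ge0 // ltW.
Qed.

Lemma atom_pow (a b : nat) n : coprime a b -> (1 < a)%N -> (1 < b)%N ->
  atom (a%:R / b%:R) ((a%:R / b%:R) ^+ n).
Proof.
set r : rat := a%:R / b%:R => co_ab a_gt1 b_gt1.
have a_gt0 : 0 < a%:R :> rat by rewrite ltr0n ltnW.
have b_gt0 : 0 < b%:R :> rat by rewrite ltr0n ltnW.
have r_gt0 : 0 < r by rewrite divr_gt0.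
have rn_neq0 : r ^+ n != 0 by rewrite expf_neq0 // gt_eqF.
split; [exact: in_Sr_pow | exact: rn_neq0 |].
move=> y z Sy Sz yz.
have [->|y_neq0] := eqVneq y 0; first by left.
have [->|z_neq0] := eqVneq z 0; first by right.
exfalso.
have [[s1 y_def] [s2 z_def]] := (Sy, Sz).
have lt_rn k : k \in s1 ++ s2 -> r ^+ k < r ^+ n.
  rewrite yz mem_cat => /orP[] ks.
    apply: (@le_lt_trans _ _ y); first by rewrite y_def pow_le_sum_pow // ltW.
    by rewrite ltrDl (in_Sr_pos r_gt0 Sz).
  apply: (@le_lt_trans _ _ z); first by rewrite z_def pow_le_sum_pow // ltW.
  by rewrite ltrDr (in_Sr_pos r_gt0 Sy).
have sum1 : \sum_(k <- s1 ++ s2) r ^+ k / r ^+ n = 1.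
  by rewrite -mulr_suml big_cat /= -y_def -z_def -yz divff.
case: ltngtP (coprime_neq co_ab a_gt1) => // [lt_ab | lt_ba] _.
- have r_lt1 : r < 1 by rewrite ltr_pdivrMr // mul1r ltr_nat.
  have lt_nk k : k \in s1 ++ s2 -> (n < k)%N by move/lt_rn; rewrite ltr_iXn2l.
  have exps_pos : all (leq 1) [seq k - n | k <- s1 ++ s2]%N.
    by apply/allP => _ /mapP [k /lt_nk lt_nk' ->]; rewrite subn_gt0.
  move/eqP: (sum_pos_powers_neq1 a_gt1 (ltnW b_gt1) co_ab exps_pos); apply.
  rewrite big_map -[RHS]sum1 !big_seq; apply: eq_bigr => k /lt_nk lt_nk'.
  by rewrite expfB.
- have r_gt1 : 1 < r by rewrite ltr_pdivlMr // mul1r ltr_nat.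
  have co_ba : coprime b a by rewrite coprime_sym.
  have lt_kn k : k \in s1 ++ s2 -> (k < n)%N by move/lt_rn; rewrite ltr_eXn2l.
  have exps_pos : all (leq 1) [seq n - k | k <- s1 ++ s2]%N.
    by apply/allP => _ /mapP [k /lt_kn lt_kn' ->]; rewrite subn_gt0.
  move/eqP: (sum_pos_powers_neq1 b_gt1 (ltnW a_gt1) co_ba exps_pos); apply.
  rewrite big_map -[RHS]sum1 !big_seq; apply: eq_bigr => k /lt_kn lt_kn'.
  by rewrite -invf_div exprVn expfB // invf_div.
Qed.

(* Every element of [S_(1/b)] splits, since [b^-k = b * b^-(k+1)]. *)
Lemma not_atomic_invn (b : nat) : (1 < b)%N -> ~ atomic (b%:R)^-1.
Proof.
set r : rat := (b%:R)^-1 => b_gt1 atomic_r.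
have r_gt0 : 0 < r by rewrite invr_gt0 ltr0n ltnW.
have [[|a s] [atoms_s sum_s]] := atomic_r 1 (in_Sr_natr r 1) (oner_neq0 _).
  by move/eqP: sum_s; rewrite big_nil eq_sym oner_eq0.
have [[[|k ks] a_def] a_neq0 irr] := atoms_s a (mem_head a s).
  by rewrite a_def big_nil eqxx in a_neq0.
have rk_split : r ^+ k = r ^+ k.+1 + r ^+ k.+1 *+ b.-1.
  rewrite -mulrS prednK ?(ltnW b_gt1) // exprSr -mulr_natr -mulrA.
  by rewrite mulVf ?mulr1 // pnatr_eq0 -lt0n ltnW.
have Srest : in_Sr r (r ^+ k.+1 *+ b.-1 + \sum_(j <- ks) r ^+ j).
  by exists (nseq b.-1 k.+1 ++ ks); rewrite big_cat big_nseq iter_addr_0.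
have rest_gt0 : 0 < r ^+ k.+1 *+ b.-1 + \sum_(j <- ks) r ^+ j.
  apply: ltr_wpDr; first by apply: sumr_ge0 => j _; rewrite exprn_ge0 // ltW.
  by rewrite pmulrn_lgt0 ?exprn_gt0 // -subn1 subn_gt0.
have a_split : a = r ^+ k.+1 + (r ^+ k.+1 *+ b.-1 + \sum_(j <- ks) r ^+ j).
  by rewrite a_def big_cons rk_split addrA.
by case: (irr _ _ (in_Sr_pow r k.+1) Srest a_split) => /eqP; apply/negP;
  rewrite gt_eqF ?exprn_gt0.
Qed.

Lemma bernoulli_ineq (R : realDomainType) (w : R) N : 0 <= w ->
  1 + N%:R * w <= (1 + w) ^+ N.
Proof.
move=> w_ge0; elim: N => [|N IH]; first by rewrite mul0r addr0 expr0.
have N_ge0 : 0 <= N%:R :> R by rewrite ler0n.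
rewrite exprSr mulrSr; nra.
Qed.

Lemma exprn_unbounded (R : archiRealFieldType) (c q : R) : 1 < c ->
  exists N, q < c ^+ N.
Proof.
move=> c_gt1; pose w := c - 1; have w_gt0 : 0 < w by rewrite subr_gt0.
have bound_ge0 : 0 <= `|q| / w by rewrite divr_ge0 // ltW.
exists (Num.Def.archi_bound (`|q| / w)).
rewrite -[c](subrK 1) addrC -/w.
apply: (le_lt_trans (ler_norm q)).
apply: lt_le_trans (bernoulli_ineq _ (ltW w_gt0)).
by rewrite ltr_wpDl // -ltr_pdivrMr // archi_boundP.
Qed.

Lemma lengths_natr_pow_frac (a b N : nat) :
  coprime a b -> (1 < a)%N -> (1 < b)%N ->
  lengths (a%:R / b%:R) (a ^ N)%:R (a ^ N) /\
  lengths (a%:R / b%:R) (a ^ N)%:R (b ^ N).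
Proof.
move=> co_ab a_gt1 b_gt1; split.
  have -> : (a ^ N)%:R = (a%:R / b%:R) ^+ 0 *+ a ^ N :> rat by rewrite expr0.
  exact/lengths_nseq/atom_pow.
have -> : (a ^ N)%:R = (a%:R / b%:R) ^+ N *+ b ^ N :> rat.
  rewrite expr_div_n -!natrX -[RHS]mulr_natr divfK //.
  by rewrite pnatr_eq0 -lt0n expn_gt0 ltnW.
exact/lengths_nseq/atom_pow.
Qed.

Lemma rho_Sr_frac_unbounded (a b : nat) q :
  coprime a b -> (1 < a)%N -> (1 < b)%N ->
  ~ rho_Sr_ub (a%:R / b%:R) q.
Proof.
move=> co_ab a_gt1 b_gt1 ub.
have ratio_le_q N u v : lengths (a%:R / b%:R) (a ^ N)%:R u ->
    lengths (a%:R / b%:R) (a ^ N)%:R v -> u%:R / v%:R <= q.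
  have x_neq0 : (a ^ N)%:R != 0 :> rat by rewrite pnatr_eq0 -lt0n expn_gt0 ltnW.
  move: (ub _ (in_Sr_natr _ _) x_neq0).
  case E : rho => [rho_x|//] rho_x_le Lu Lv.
  exact: le_trans (rho_ge_lengths_ratio x_neq0 E Lu Lv) rho_x_le.
have ratio_unbounded u v : (0 < v < u)%N ->
    (forall N, lengths (a%:R / b%:R) (a ^ N)%:R (u ^ N)) ->
    (forall N, lengths (a%:R / b%:R) (a ^ N)%:R (v ^ N)) -> False.
  move=> /andP [v_gt0 lt_vu] Lu Lv.
  have ratio_gt1 : 1 < u%:R / v%:R :> rat.
    by rewrite ltr_pdivlMr ?ltr0n // mul1r ltr_nat.
  have [N] := exprn_unbounded q ratio_gt1.
  by rewrite expr_div_n -!natrX ltNge (ratio_le_q N).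
have La N := proj1 (lengths_natr_pow_frac N co_ab a_gt1 b_gt1).
have Lb N := proj2 (lengths_natr_pow_frac N co_ab a_gt1 b_gt1).
case: ltngtP (coprime_neq co_ab a_gt1) => // [lt_ab|lt_ba] _.
  by apply: (ratio_unbounded b a); rewrite ?(ltnW a_gt1).
by apply: (ratio_unbounded a b); rewrite ?(ltnW b_gt1).
Qed.

Lemma rho_Sr_unbounded r : 0 < r -> atomic r -> ~ (exists n : nat, r = n%:R) ->
  rho_Sr_is r None.
Proof.
move=> r_gt0 atomic_r r_not_nat q.
have [a [b [r_def co_ab a_gt0 b_gt0]]] := pos_rat_coprime_frac r_gt0.
have b_gt1 : (1 < b)%N.
  case: b b_gt0 r_def {co_ab} => [|[|b]] // _ r_def.
  by case: r_not_nat; exists a; rewrite r_def divr1.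
have a_gt1 : (1 < a)%N.
  case: a a_gt0 r_def {co_ab} => [|[|a]] // _ r_def.
  by case: (not_atomic_invn b_gt1); rewrite -div1r -r_def.
by rewrite r_def; exact: rho_Sr_frac_unbounded.
Qed.

Theorem corollary4p2 (r : rat) (hr : 0 < r) (hat : atomic r) :
  [/\ (exists n : nat, r = n%:R) <-> rho_Sr_is r (Some 1),
      rho_Sr_is r (Some 1) <-> ~ rho_Sr_is r None
    & rho_Sr_is r (Some 1) \/ rho_Sr_is r None].
Proof.
have not_both : rho_Sr_is r (Some 1) -> ~ rho_Sr_is r None.
  by case=> ub _ /(_ 1).
have [[n r_def] | r_not_nat] := classic (exists n : nat, r = n%:R).
  have rho1 : rho_Sr_is r (Some 1) by rewrite r_def; exact: rho_Sr_natr.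
  by split; [split=> _; last exists n | split=> _; first exact: not_both|left].
have rho_oo := rho_Sr_unbounded hr hat r_not_nat.
by split; [split=> // /not_both | split=> // /(_ rho_oo) | right].
Qed.
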